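(* Let $c\ge 1$. If there exists a $c$-competitive online algorithm for line chasing in $\mathbb{R}^2$, then there exists a $c$-competitive rts-oblivious online algorithm for line chasing in $\mathbb{R}^2$.
   Context: Line chasing in $\mathbb{R}^2$: given an initial point $P_0$ and lines $X_1,\dots,X_m$ revealed one at a time, an online algorithm chooses $P_t\in X_t$ knowing only $P_0,X_1,\dots,X_t$. Formally an algorithm is a function $\mathcal{A}$ with $\mathcal{A}(P_0)=P_0$ and $\mathcal{A}(P_0,X_1,\dots,X_t)\in X_t$ for all $P_0$ and lines $X_1,\dots,X_t$; its cost on $P_0,X_1,\dots,X_m$ is $\sum_{t=1}^m|\mathcal{A}(P_0,X_1,\dots,X_{t-1})\,\mathcal{A}(P_0,X_1,\dots,X_t)|$ (Euclidean distances). It is $c$-competitive if on every input its cost is at most $c$ times $\min\{\sum_t|A_{t-1}A_t|: A_0=P_0, A_t\in X_t\}$. A direct similarity of $\mathbb{R}^2$ is a bijection $f$ that is a composition of a rotation, a translation and a scaling by some factor $r_f>0$. $\mathcal{A}$ is rts-oblivious if $\mathcal{A}(f(P_0),f(X_1),\dots,f(X_t))=f(\mathcal{A}(P_0,X_1,\dots,X_t))$ for every $P_0$, all lines $X_i$, and every direct similarity $f$. *)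

From Stdlib Require Import Reals List Lra.
Import ListNotations.
Open Scope R_scope.

Definition point : Type := (R * R)%type.

Definition dist (p q : point) : R :=
  sqrt ((fst p - fst q) ^ 2 + (snd p - snd q) ^ 2).

Definition is_line (X : point -> Prop) : Prop :=
  exists a b d : R, (a <> 0 \/ b <> 0) /\
    forall p : point, X p <-> a * fst p + b * snd p = d.

Fixpoint path_cost (ps : list point) : R :=
  match ps with
  | p :: ((q :: _) as rest) => dist p q + path_cost rest
  | _ => 0
  end.

(** An (online) algorithm maps P0 and the lines revealed so far
    [X1; ...; Xt] (in this order) to a point.  Since it only sees
    P0, X1, ..., Xt, it is online by construction. *)
Definition algorithm : Type := point -> list (point -> Prop) -> point.

Definition online_algorithm (A : algorithm) : Prop :=
  (forall P0, A P0 [] = P0) /\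
  (forall P0 (Xs : list (point -> Prop)) (X : point -> Prop),
      Forall is_line (Xs ++ [X]) -> X (A P0 (Xs ++ [X]))).

(** Cost of A on P0, X1..Xm :
    sum_{t=1}^m |A(P0,X1..X_{t-1}) A(P0,X1..X_t)|. *)
Definition alg_cost (A : algorithm) (P0 : point) (Xs : list (point -> Prop)) : R :=
  path_cost (map (fun t => A P0 (firstn t Xs)) (seq 0 (S (length Xs)))).

(** c-competitive: for every input, cost <= c * min over offline
    solutions A_0 = P0, A_t \in X_t of sum |A_{t-1} A_t|; stated
    as cost <= c * (cost of each offline solution). *)
Definition competitive (c : R) (A : algorithm) : Prop :=
  forall (P0 : point) (Xs : list (point -> Prop)),
    Forall is_line Xs ->
    forall Bs : list point, Forall2 (fun X b => X b) Xs Bs ->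
      alg_cost A P0 Xs <= c * path_cost (P0 :: Bs).

Definition direct_similarity (f : point -> point) : Prop :=
  exists (r theta tx ty : R), 0 < r /\
    forall p : point,
      f p = (r * (cos theta * fst p - sin theta * snd p) + tx,
             r * (sin theta * fst p + cos theta * snd p) + ty).

Definition image (f : point -> point) (X : point -> Prop) : point -> Prop :=
  fun q => exists p, X p /\ q = f p.

Definition rts_oblivious (A : algorithm) : Prop :=
  forall (f : point -> point) (P0 : point) (Xs : list (point -> Prop)),
    direct_similarity f -> Forall is_line Xs ->
    A (f P0) (map (image f) Xs) = f (A P0 Xs).

(* While every revealed line passes through P0, the new algorithm stays at P0.
   At the first line X missing P0 it fixes the direct similarity g with g P0 = 0
   and g F = 1, where F is the foot of the perpendicular from P0 to X, and from
   then on answers g^-1 (A (0, g X1, ..., g Xt)).  A direct similarity applied to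
   the input moves P0 and F along with it, so the normalized input handed to A
   does not change: the algorithm is rts-oblivious.  The map g scales all lengths
   by 1 / |F - P0|, so A's guarantee on the normalized input transfers to the
   original one, and staying at P0 instead of following A's early moves only
   shortcuts A's path, by the triangle inequality. *)

From Pilot Require Import Defs.
From Stdlib Require Import Reals List Lra Lia ClassicalEpsilon FunctionalExtensionality PropExtensionality.
From Coquelicot Require Import Complex.
(* Re-imported so that [dist] is the Euclidean distance of Defs, not the metric-space
   [dist] that Coquelicot brings into scope.  Points, being [R * R] like [C], are
   manipulated as complex numbers. *)
Import Defs.
Import ListNotations.
Open Scope R_scope.

Lemma dist_Cmod (p q : point) : dist p q = Cmod (p - q)%C.
Proof. reflexivity. Qed.

Lemma dist_ge0 (p q : point) : 0 <= dist p q.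
Proof. rewrite dist_Cmod; apply Cmod_ge_0. Qed.

Lemma dist_self (p : point) : dist p p = 0.
Proof. rewrite dist_Cmod. replace (p - p)%C with (RtoC 0) by ring. apply Cmod_0. Qed.

Lemma dist_triangle (p q r : point) : dist p r <= dist p q + dist q r.
Proof.
  rewrite !dist_Cmod. replace (p - r)%C with ((p - q) + (q - r))%C by ring.
  apply Cmod_triangle.
Qed.

Lemma path_cost_ge0 (l : list point) : 0 <= path_cost l.
Proof.
  induction l as [|x [|y l] IH]; simpl; try lra.
  pose proof (dist_ge0 x y); simpl in IH; lra.
Qed.

Lemma path_cost_cons_le (x y : point) (l : list point) :
  path_cost (x :: l) <= dist x y + path_cost (y :: l).
Proof.
  destruct l as [|z l]; simpl.
  - pose proof (dist_ge0 x y); lra.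
  - pose proof (dist_triangle x y z); lra.
Qed.

Lemma path_cost_shortcut (x : point) (m l : list point) :
  path_cost (x :: l) <= path_cost (x :: m ++ l).
Proof.
  revert x; induction m as [|y m IH]; intro x; simpl; [lra|].
  pose proof (IH y); pose proof (path_cost_cons_le x y l).
  destruct (m ++ l); simpl in *; lra.
Qed.

Lemma path_cost_repeat (x : point) (k : nat) (l : list point) :
  path_cost (x :: repeat x k ++ l) = path_cost (x :: l).
Proof.
  induction k as [|k IH]; [reflexivity|].
  change (dist x x + path_cost (x :: repeat x k ++ l) = path_cost (x :: l)).
  rewrite IH, dist_self; ring.
Qed.

Lemma path_cost_freeze (b c : nat -> point) (K n : nat) : (K <= n)%nat ->
  (forall t, (t < K)%nat -> b t = c 0%nat) -> (forall t, (K <= t)%nat -> b t = c t) ->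
  path_cost (map b (seq 0 n)) <= path_cost (map c (seq 0 n)).
Proof.
  intros HKn Hfrozen Hlate.
  destruct K as [|k].
  - rewrite (map_ext_in b c) by (intros t _; apply Hlate; lia); lra.
  - replace n with (S k + (n - S k))%nat by lia.
    rewrite seq_app, !map_app.
    rewrite (map_ext_in b (fun _ => c 0%nat) (seq 0 (S k)))
      by (intros t Ht; apply in_seq in Ht; apply Hfrozen; lia).
    rewrite (map_ext_in b c (seq _ (n - S k)))
      by (intros t Ht; apply in_seq in Ht; apply Hlate; lia).
    rewrite map_const, length_seq; cbn [seq map repeat app].
    rewrite path_cost_repeat; apply path_cost_shortcut.
Qed.

Definition affine (a b p : C) : C := (a * p + b)%C.

Lemma dist_affine (a b : C) (p q : point) :
  dist (affine a b p) (affine a b q) = Cmod a * dist p q.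
Proof.
  unfold affine; rewrite !dist_Cmod, <- Cmod_mult.
  f_equal; ring.
Qed.

Lemma path_cost_map_affine (a b : C) (l : list point) :
  path_cost (map (affine a b) l) = Cmod a * path_cost l.
Proof.
  induction l as [|x [|y l] IH]; simpl; try ring.
  simpl in IH; rewrite IH, dist_affine; ring.
Qed.

Lemma affine_inj (a b p q : C) : a <> RtoC 0 ->
  affine a b p = affine a b q -> p = q.
Proof.
  unfold affine; intros Ha E.
  replace p with (/ a * ((a * p + b) - b))%C by (field; exact Ha).
  rewrite E; field; exact Ha.
Qed.

Lemma image_affine_mem (a b : C) (X : point -> Prop) (p : point) : a <> RtoC 0 ->
  image (affine a b) X (affine a b p) <-> X p.
Proof.
  intro Ha; split.
  - intros [q [Hq E]]; apply affine_inj in E as ->; assumption.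
  - intro Hp; exists p; split; auto.
Qed.

Lemma image_comp (f g : point -> point) (X : point -> Prop) :
  image g (image f X) = image (fun p => g (f p)) X.
Proof.
  apply functional_extensionality; intro q; apply propositional_extensionality; split.
  - intros [r [[p [Hp ->]] ->]]; exists p; auto.
  - intros [p [Hp ->]]; exists (f p); split; [exists p; split|]; auto.
Qed.

Lemma image_affine_iff (a b : C) (X : point -> Prop) (q : C) : a <> RtoC 0 ->
  image (affine a b) X q <-> X (affine (/ a) (- b / a) q).
Proof.
  intro Ha.
  replace q with (affine a b (affine (/ a) (- b / a) q)) at 1
    by (unfold affine; field; exact Ha).
  apply image_affine_mem, Ha.
Qed.

Lemma sum_sq_pos (x y : R) : x <> 0 \/ y <> 0 -> 0 < x ^ 2 + y ^ 2.
Proof.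
  intros [H|H]; pose proof (Rsqr_pos_lt _ H); unfold Rsqr in *; nra.
Qed.

Lemma Cnorm2_pos (u : C) : u <> RtoC 0 -> 0 < fst u ^ 2 + snd u ^ 2.
Proof.
  intro Hu; apply sum_sq_pos.
  destruct u as [u1 u2]; simpl.
  destruct (Req_dec u1 0) as [->|]; [|now left].
  destruct (Req_dec u2 0) as [->|]; [now contradiction Hu | now right].
Qed.

Lemma is_line_preimage_affine (u w : C) (X : point -> Prop) : u <> RtoC 0 ->
  is_line X -> is_line (fun q => X (affine u w q)).
Proof.
  intros Hu [a [b [d [Hab HX]]]].
  pose proof (Cnorm2_pos u Hu) as Hu2.
  destruct u as [u1 u2], w as [w1 w2]; simpl in Hu2.
  exists (a * u1 + b * u2), (b * u1 - a * u2), (d - a * w1 - b * w2); split.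
  - assert (Hnorm : (a * u1 + b * u2) ^ 2 + (b * u1 - a * u2) ^ 2
                     = (a ^ 2 + b ^ 2) * (u1 ^ 2 + u2 ^ 2)) by ring.
    destruct (Req_dec (a * u1 + b * u2) 0) as [E1|]; [|now left].
    destruct (Req_dec (b * u1 - a * u2) 0) as [E2|]; [|now right].
    pose proof (sum_sq_pos a b Hab); rewrite E1, E2 in Hnorm; nra.
  - intros [q1 q2]; rewrite HX; unfold affine; simpl; split; intro; lra.
Qed.

Lemma Cinv_neq0 (a : C) : a <> RtoC 0 -> (/ a)%C <> RtoC 0.
Proof.
  intro Ha; apply Cmod_gt_0; rewrite Cmod_inv by exact Ha.
  apply Rinv_0_lt_compat, Cmod_gt_0, Ha.
Qed.

Lemma is_line_image_affine (a b : C) (X : point -> Prop) : a <> RtoC 0 ->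
  is_line X -> is_line (image (affine a b) X).
Proof.
  intros Ha HX.
  destruct (is_line_preimage_affine _ (- b / a) X (Cinv_neq0 a Ha) HX)
    as [a' [b' [d [Hab H]]]].
  exists a', b', d; split; [exact Hab|].
  intro q; rewrite image_affine_iff by exact Ha; apply H.
Qed.

Lemma direct_similarity_affine (f : point -> point) : direct_similarity f ->
  exists a b, a <> RtoC 0 /\ f = affine a b.
Proof.
  intros [r [th [tx [ty [Hr Hf]]]]].
  exists (r * cos th, r * sin th), (tx, ty); split.
  - intro E; injection E as E1 E2.
    pose proof (sin2_cos2 th) as Hpyth; unfold Rsqr in Hpyth; nra.
  - apply functional_extensionality; intro p.
    rewrite Hf; unfold affine, Cmult, Cplus; destruct p; simpl; f_equal; ring.
Qed.

Definition dot (u w : C) : R := fst u * fst w + snd u * snd w.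

Lemma dot_scale (a u w : C) : dot (a * u) (a * w) = (fst a ^ 2 + snd a ^ 2) * dot u w.
Proof. destruct a, u, w; unfold dot, Cmult; simpl; ring. Qed.

Definition is_foot (P0 : point) (X : point -> Prop) (F : point) : Prop :=
  X F /\ forall q, X q -> dot (q - F) (F - P0) = 0.

Lemma foot_exists (P0 : point) (X : point -> Prop) : is_line X -> exists F, is_foot P0 X F.
Proof.
  intros [a [b [d [Hab HX]]]]; destruct P0 as [x0 y0].
  pose proof (sum_sq_pos a b Hab) as Hn.
  set (t := (d - a * x0 - b * y0) / (a ^ 2 + b ^ 2)).
  exists (x0 + t * a, y0 + t * b); split.
  - apply HX; simpl; unfold t; field; lra.
  - intros [q1 q2] Hq; apply HX in Hq; simpl in Hq; unfold dot; simpl.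
    replace ((q1 + - (x0 + t * a)) * (x0 + t * a + - x0)
             + (q2 + - (y0 + t * b)) * (y0 + t * b + - y0))
      with (t * ((a * q1 + b * q2) - (a * x0 + b * y0) - t * (a ^ 2 + b ^ 2))) by ring.
    rewrite Hq; unfold t; field; lra.
Qed.

Lemma is_foot_unique (P0 : point) (X : point -> Prop) (F1 F2 : point) :
  is_foot P0 X F1 -> is_foot P0 X F2 -> F1 = F2.
Proof.
  intros [H1 K1] [H2 K2]; specialize (K1 F2 H2); specialize (K2 F1 H1).
  destruct F1 as [a b], F2 as [c d], P0 as [x y]; unfold dot in *; simpl in *.
  assert (E : Rsqr (c - a) + Rsqr (d - b) = 0) by (unfold Rsqr; nra).
  apply Rplus_sqr_eq_0 in E; f_equal; lra.
Qed.

Definition foot (P0 : point) (X : point -> Prop) : point :=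
  epsilon (inhabits P0) (is_foot P0 X).

Lemma foot_spec (P0 : point) (X : point -> Prop) : is_line X -> is_foot P0 X (foot P0 X).
Proof. intro HX; unfold foot; apply epsilon_spec, foot_exists, HX. Qed.

Lemma foot_eq (P0 : point) (X : point -> Prop) (F : point) : is_foot P0 X F -> foot P0 X = F.
Proof.
  intro HF; apply (is_foot_unique P0 X); [|exact HF].
  unfold foot; apply epsilon_spec; exists F; exact HF.
Qed.

Lemma foot_neq (P0 : point) (X : point -> Prop) : is_line X -> ~ X P0 -> foot P0 X <> P0.
Proof. intros HX HP0 E; apply HP0; rewrite <- E; apply foot_spec, HX. Qed.

Lemma is_foot_affine (a b : C) (P0 : point) (X : point -> Prop) (F : point) :
  is_foot P0 X F -> is_foot (affine a b P0) (image (affine a b) X) (affine a b F).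
Proof.
  intros [HF Hperp]; split; [exists F; split; auto|].
  intros q [p [Hp ->]]; unfold affine.
  replace (a * p + b - (a * F + b))%C with (a * (p - F))%C by ring.
  replace (a * F + b - (a * P0 + b))%C with (a * (F - P0))%C by ring.
  rewrite dot_scale, (Hperp p Hp); ring.
Qed.

Lemma foot_affine (a b : C) (P0 : point) (X : point -> Prop) : is_line X ->
  foot (affine a b P0) (image (affine a b) X) = affine a b (foot P0 X).
Proof. intro HX; apply foot_eq, is_foot_affine, foot_spec, HX. Qed.

Fixpoint first_missing (P0 : point) (Xs : list (point -> Prop)) : option (point -> Prop) :=
  match Xs with
  | [] => None
  | X :: Xs' => if excluded_middle_informative (X P0) then first_missing P0 Xs' else Some X
  end.

Lemma first_missing_None (P0 : point) (Xs : list (point -> Prop)) :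
  first_missing P0 Xs = None <-> Forall (fun X => X P0) Xs.
Proof.
  induction Xs as [|X Xs IH]; simpl; [split; auto|].
  destruct (excluded_middle_informative (X P0)) as [HX|HX].
  - rewrite IH; split; intro H; [constructor; auto | inversion H; auto].
  - split; intro H; [discriminate | inversion H; contradiction].
Qed.

Lemma first_missing_Some (P0 : point) (Xs : list (point -> Prop)) (X : point -> Prop) :
  first_missing P0 Xs = Some X -> In X Xs /\ ~ X P0.
Proof.
  induction Xs as [|Y Xs IH]; simpl; [discriminate|].
  destruct (excluded_middle_informative (Y P0)) as [HY|HY]; intro E.
  - destruct (IH E); auto.
  - injection E as <-; auto.
Qed.

Lemma first_missing_firstn (P0 : point) (Xs : list (point -> Prop)) (X : point -> Prop) :
  first_missing P0 Xs = Some X -> exists K, (K <= length Xs)%nat /\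
    (forall t, (t < K)%nat -> first_missing P0 (firstn t Xs) = None) /\
    (forall t, (K <= t)%nat -> first_missing P0 (firstn t Xs) = Some X).
Proof.
  induction Xs as [|Y Xs IH]; simpl; [discriminate|].
  destruct (excluded_middle_informative (Y P0)) as [HY|HY]; intro E.
  - destruct (IH E) as [K [HK [Hbefore Hafter]]].
    exists (S K); split; [lia|]; split; intros [|t] Ht; simpl; auto; try lia;
      destruct (excluded_middle_informative (Y P0)); try contradiction.
    + apply Hbefore; lia.
    + apply Hafter; lia.
  - exists 1%nat; split; [lia|]; split; intros [|t] Ht; simpl; auto; try lia.
    destruct (excluded_middle_informative (Y P0)); [contradiction | exact E].
Qed.

Lemma first_missing_affine (a b : C) (P0 : point) (Xs : list (point -> Prop)) : a <> RtoC 0 ->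
  first_missing (affine a b P0) (map (image (affine a b)) Xs)
  = option_map (image (affine a b)) (first_missing P0 Xs).
Proof.
  intro Ha; induction Xs as [|X Xs IH]; simpl; [reflexivity|].
  destruct (excluded_middle_informative (image (affine a b) X (affine a b P0))) as [H|H];
  destruct (excluded_middle_informative (X P0)) as [H'|H']; auto;
    rewrite image_affine_mem in H by exact Ha; contradiction.
Qed.

Definition frame (P0 F : C) : C -> C := affine (/ (F - P0)) (- P0 / (F - P0)).

Definition unframe (P0 F : C) : C -> C := affine (F - P0) P0.

Lemma Cminus_neq0 (p q : C) : p <> q -> (p - q)%C <> RtoC 0.
Proof.
  intros Hpq E; apply Hpq.
  replace p with ((p - q) + q)%C by ring; rewrite E; ring.
Qed.

Lemma unframe_frame (P0 F p : C) : F <> P0 -> unframe P0 F (frame P0 F p) = p.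
Proof.
  intro HF; apply Cminus_neq0 in HF.
  unfold unframe, frame, affine; field; exact HF.
Qed.

Lemma frame_origin (P0 F : C) : F <> P0 -> frame P0 F P0 = RtoC 0.
Proof.
  intro HF; apply Cminus_neq0 in HF.
  unfold frame, affine; field; exact HF.
Qed.

Lemma unframe_origin (P0 F : C) : unframe P0 F (RtoC 0) = P0.
Proof. unfold unframe, affine; ring. Qed.

Lemma frame_affine (a b P0 F p : C) : a <> RtoC 0 -> F <> P0 ->
  frame (affine a b P0) (affine a b F) (affine a b p) = frame P0 F p.
Proof.
  intros Ha HF.
  assert (HF' : affine a b F <> affine a b P0) by (intro E; apply HF, (affine_inj a b); auto).
  apply Cminus_neq0 in HF, HF'; unfold frame, affine in *.
  field; split; assumption.
Qed.

Lemma unframe_affine (a b P0 F w : C) :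
  unframe (affine a b P0) (affine a b F) w = affine a b (unframe P0 F w).
Proof. unfold unframe, affine; ring. Qed.

Lemma path_cost_frame (P0 F : point) (l : list point) : F <> P0 ->
  path_cost l = Cmod (F - P0) * path_cost (map (frame P0 F) l).
Proof.
  intro HF; rewrite <- (path_cost_map_affine _ P0), map_map.
  rewrite (map_ext _ (fun p => p)) by (intro; apply unframe_frame, HF).
  rewrite map_id; reflexivity.
Qed.

Lemma Forall_is_line_frame (P0 F : point) (Xs : list (point -> Prop)) : F <> P0 ->
  Forall is_line Xs -> Forall is_line (map (image (frame P0 F)) Xs).
Proof.
  intros HF HL; apply Forall_map; refine (Forall_impl _ _ HL).
  intros X HX; apply is_line_image_affine; [|exact HX].
  apply Cinv_neq0, Cminus_neq0, HF.
Qed.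

Lemma Forall2_image (g : point -> point) (Xs : list (point -> Prop)) (Bs : list point) :
  Forall2 (fun X p => X p) Xs Bs -> Forall2 (fun X p => X p) (map (image g) Xs) (map g Bs).
Proof. induction 1; simpl; constructor; [exists y; split|]; auto. Qed.

Definition rts_normalized (A : algorithm) : algorithm := fun P0 Xs =>
  match first_missing P0 Xs with
  | None => P0
  | Some X => let F := foot P0 X in
      unframe P0 F (A (RtoC 0) (map (image (frame P0 F)) Xs))
  end.

Lemma rts_normalized_online (A : algorithm) :
  online_algorithm A -> online_algorithm (rts_normalized A).
Proof.
  intros [_ HA]; split; [reflexivity|].
  intros P0 Xs X HL; unfold rts_normalized.
  destruct (first_missing P0 (Xs ++ [X])) as [Y|] eqn:E.
  - destruct (first_missing_Some _ _ _ E) as [HinY HY].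
    assert (HF : foot P0 Y <> P0)
      by (apply foot_neq; [rewrite Forall_forall in HL; auto | exact HY]).
    pose proof (Forall_is_line_frame _ _ _ HF HL) as HL'.
    rewrite map_app in HL' |- *; cbn [map] in HL' |- *.
    destruct (HA (RtoC 0) _ _ HL') as [p [Hp ->]].
    rewrite unframe_frame by exact HF; exact Hp.
  - apply first_missing_None, Forall_app in E as [_ E].
    inversion E; assumption.
Qed.

Lemma rts_normalized_idle_cost (A : algorithm) (P0 : point) (Xs : list (point -> Prop)) :
  Forall (fun X => X P0) Xs -> alg_cost (rts_normalized A) P0 Xs = 0.
Proof.
  intro Hall; unfold alg_cost.
  rewrite (map_ext_in _ (fun _ => P0)).
  - rewrite map_const, length_seq; cbn [repeat].
    rewrite <- (app_nil_r (repeat P0 _)), path_cost_repeat; reflexivity.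
  - intros t _; unfold rts_normalized.
    rewrite <- (firstn_skipn t Xs), Forall_app in Hall.
    destruct Hall as [Hprefix _]; apply first_missing_None in Hprefix as ->; reflexivity.
Qed.

Lemma rts_normalized_cost_le (A : algorithm) (P0 : point) (Xs : list (point -> Prop))
  (X : point -> Prop) : A (RtoC 0) [] = RtoC 0 -> first_missing P0 Xs = Some X ->
  alg_cost (rts_normalized A) P0 Xs
  <= Cmod (foot P0 X - P0) * alg_cost A (RtoC 0) (map (image (frame P0 (foot P0 X))) Xs).
Proof.
  intros HA0 E.
  destruct (first_missing_firstn _ _ _ E) as [K [HK [Hbefore Hafter]]].
  unfold alg_cost; rewrite length_map, <- (path_cost_map_affine _ P0), map_map.
  apply (path_cost_freeze _ _ K); [lia| |]; intros t Ht; unfold rts_normalized.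
  - rewrite Hbefore by exact Ht; cbn [firstn]; rewrite HA0; symmetry; apply unframe_origin.
  - rewrite Hafter, firstn_map by exact Ht; reflexivity.
Qed.

Lemma rts_normalized_competitive (c : R) (A : algorithm) : 0 <= c ->
  online_algorithm A -> competitive c A -> competitive c (rts_normalized A).
Proof.
  intros Hc [HA0 _] HC P0 Xs HL Bs HB.
  destruct (first_missing P0 Xs) as [X|] eqn:E.
  - destruct (first_missing_Some _ _ _ E) as [HinX HX].
    assert (HF : foot P0 X <> P0)
      by (apply foot_neq; [rewrite Forall_forall in HL; auto | exact HX]).
    eapply Rle_trans; [exact (rts_normalized_cost_le A P0 Xs X (HA0 _) E)|].
    rewrite (path_cost_frame P0 (foot P0 X) (P0 :: Bs)) by exact HF.
    cbn [map]; rewrite frame_origin by exact HF.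
    rewrite (Rmult_comm c), Rmult_assoc; apply Rmult_le_compat_l; [apply Cmod_ge_0|].
    rewrite Rmult_comm.
    exact (HC (RtoC 0) _ (Forall_is_line_frame _ _ _ HF HL) _ (Forall2_image _ _ _ HB)).
  - rewrite rts_normalized_idle_cost by (apply first_missing_None, E).
    pose proof (path_cost_ge0 (P0 :: Bs)); nra.
Qed.

Lemma rts_normalized_oblivious (A : algorithm) : rts_oblivious (rts_normalized A).
Proof.
  intros f P0 Xs Hf HL; destruct (direct_similarity_affine f Hf) as [a [b [Ha ->]]].
  unfold rts_normalized; rewrite first_missing_affine by exact Ha.
  destruct (first_missing P0 Xs) as [X|] eqn:E; [|reflexivity]; cbn [option_map].
  destruct (first_missing_Some _ _ _ E) as [HinX HX].
  assert (HXline : is_line X) by (rewrite Forall_forall in HL; auto).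
  pose proof (foot_neq P0 X HXline HX) as HF.
  rewrite foot_affine, unframe_affine by exact HXline; do 3 f_equal.
  rewrite map_map; apply map_ext; intro Y; rewrite image_comp; f_equal.
  apply functional_extensionality; intro p; apply frame_affine; assumption.
Qed.

Theorem mainTheorem3 (c : R) (hc : 1 <= c) :
  (exists A : algorithm, online_algorithm A /\ competitive c A) ->
  exists A : algorithm, online_algorithm A /\ competitive c A /\ rts_oblivious A.
Proof.
  intros [A [Honline Hcomp]].
  exists (rts_normalized A); split; [|split].
  - apply rts_normalized_online, Honline.
  - apply rts_normalized_competitive; [lra | exact Honline | exact Hcomp].
  - apply rts_normalized_oblivious.
Qed.
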